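(* Let $\sigma\in\mathrm{Spin}(\Sigma_g)$. The assignment $\overline{C}\mapsto(-1)^{q_\sigma(C)}i_C$ extends to a well-defined homomorphism of unital $\mathbb{Z}/8$-algebras $\Phi:W_\sigma\to\mathrm{Map}(H_1(\Sigma_g;\mathbb{Z}/2),\mathbb{Z}/8)$.
   Context: $\Sigma_g$ is a closed oriented genus $g$ surface; $\cdot$ is the mod 2 intersection form on $H_1(\Sigma_g;\mathbb{Z}/2)$. To $\sigma\in\mathrm{Spin}(\Sigma_g)$ is associated (Johnson) a quadratic form $q_\sigma:H_1(\Sigma_g;\mathbb{Z}/2)\to\mathbb{Z}/2$, $q_\sigma(y+z)=q_\sigma(y)+q_\sigma(z)+y\cdot z$. For $z\in H_1(\Sigma_g;\mathbb{Z}/2)$, $i_z(y)=1\in\mathbb{Z}/8$ if $z\cdot y\equiv1\pmod2$ and $0$ otherwise. $\mathrm{Map}(H_1(\Sigma_g;\mathbb{Z}/2),\mathbb{Z}/8)$ is a $\mathbb{Z}/8$-algebra under pointwise operations. $W_\sigma$ is the unital associative commutative $\mathbb{Z}/8$-algebra generated by symbols $\overline{C}$, $C\in H_1(\Sigma_g;\mathbb{Z}/2)$, subject to: (i) $\overline{C_1+C_2}=(-1)^{C_1\cdot C_2}\big((-1)^{q_\sigma(C_2)}\overline{C_1}+(-1)^{q_\sigma(C_1)}\overline{C_2}-2\overline{C_1}\,\overline{C_2}\big)$ for all $C_1\ne C_2$; (ii) $\overline{C}^2=(-1)^{q_\sigma(C)}\overline{C}$ for all $C$. *)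

From HB Require Import structures.
From mathcomp Require Import all_boot all_order all_algebra.
From mathcomp Require Import mpoly.
Set Implicit Arguments. Unset Strict Implicit. Unset Printing Implicit Defensive.
Import GRing.Theory.
Local Open Scope ring_scope.

(* H_1(Sigma_g; Z/2) modelled as (Z/2)^(2g) with symplectic basis
   a_1..a_g (first g coordinates), b_1..b_g (last g coordinates). *)
Definition H1 (g : nat) := 'rV['F_2]_(g + g).

Definition ipair (g : nat) (x y : H1 g) : 'F_2 :=
  (lsubmx x *m (rsubmx y)^T + rsubmx x *m (lsubmx y)^T) 0 0.

Definition is_quadratic_refinement (g : nat) (q : H1 g -> 'F_2) : Prop :=
  forall y z : H1 g, q (y + z) = q y + q z + ipair y z.

Definition sgn8 (b : 'F_2) : 'Z_8 := if b == 0 then 1 else -1.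

Definition ind (g : nat) (z : H1 g) : {ffun H1 g -> 'Z_8} :=
  [ffun y => if ipair z y == 1 then 1 else 0].

(* The free unital commutative Z/8-algebra on symbols \bar C, C in H1 g:
   polynomial ring with one variable per element of H1 g. *)
Definition FreeW (g : nat) := {mpoly 'Z_8[#|{: H1 g}|]}.

Definition gen (g : nat) (C : H1 g) : FreeW g := 'X_(enum_rank C).

(* The defining relators of W_sigma (relation r holds iff relator = 0). *)
Definition relator1 (g : nat) (q : H1 g -> 'F_2) (C1 C2 : H1 g) : FreeW g :=
  gen (C1 + C2) -
  (sgn8 (ipair C1 C2)) *: ((sgn8 (q C2)) *: gen C1 + (sgn8 (q C1)) *: gen C2
                            - 2%:R *: (gen C1 * gen C2)).

Definition relator2 (g : nat) (q : H1 g -> 'F_2) (C : H1 g) : FreeW g :=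
  gen C ^+ 2 - (sgn8 (q C)) *: gen C.

Definition is_relator (g : nat) (q : H1 g -> 'F_2) (r : FreeW g) : Prop :=
  (exists C1 C2 : H1 g, C1 != C2 /\ r = relator1 q C1 C2)
  \/ (exists C : H1 g, r = relator2 q C).

(* The ideal generated by the relators; W_sigma = FreeW g / relIdeal q. *)
Definition in_relIdeal (g : nat) (q : H1 g -> 'F_2) (p : FreeW g) : Prop :=
  exists (s : seq (FreeW g * FreeW g)),
    (forall ar, ar \in s -> is_relator q ar.2) /\
    p = \sum_(ar <- s) ar.1 * ar.2.

From HB Require Import structures.
From mathcomp Require Import all_boot all_order all_algebra.
From mathcomp Require Import mpoly.
Import GRing.Theory.
Local Open Scope ring_scope.

(* W_sigma is the quotient of the polynomial algebra FreeW g
   (one variable per class C in H1 g) by the ideal of the relators, so a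
   homomorphism out of W_sigma is an algebra map out of FreeW g killing the
   relators.  We take Phi p = (y |-> p evaluated at the point
   X_C := (-1)^q(C) i_C(y)); pointwise polynomial evaluation is additive,
   multiplicative, Z/8-linear and sends 1 to 1.  Each relator evaluates to 0
   at every y: by the quadratic-refinement identity and bilinearity of the
   intersection form, this reduces to two identities in Z/8 about the
   values (-1)^e and i in {0,1}, which are checked by finite enumeration
   over F_2.  Finally, a multiplicative additive map killing the relators
   kills every element sum a_k r_k of the ideal they generate. *)

Definition indicator (x : 'F_2) : 'Z_8 := if x == 1 then 1 else 0.

Lemma indE (g : nat) (C y : H1 g) : ind C y = indicator (ipair C y).
Proof. by rewrite ffunE. Qed.

Lemma ipairDl (g : nat) (x z y : H1 g) : ipair (x + z) y = ipair x y + ipair z y.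
Proof. by rewrite /ipair !linearD /= !mulmxDl !mxE addrACA. Qed.

(* Relation (i) at a point: with a = C1.y, b = C2.y, e = C1.C2 and q1, q2
   the values of q, the images of C1 + C2, C1, C2 satisfy relation (i). *)
Lemma sgn8_indicator_sum (a b e q1 q2 : 'F_2) :
  sgn8 (q1 + q2 + e) * indicator (a + b) =
  sgn8 e * (sgn8 q2 * (sgn8 q1 * indicator a) + sgn8 q1 * (sgn8 q2 * indicator b)
    - 2%:R * ((sgn8 q1 * indicator a) * (sgn8 q2 * indicator b))).
Proof.
by case: a => [[|[|//]]] ?; case: b => [[|[|//]]] ?; case: e => [[|[|//]]] ?;
   case: q1 => [[|[|//]]] ?; case: q2 => [[|[|//]]] ?; apply/eqP.
Qed.

Lemma sgn8_indicator_sqr (a q1 : 'F_2) :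
  (sgn8 q1 * indicator a) ^+ 2 = sgn8 q1 * (sgn8 q1 * indicator a).
Proof. by case: a => [[|[|//]]] ?; case: q1 => [[|[|//]]] ?; apply/eqP. Qed.

Lemma vanish_on_ideal {R S : pzRingType} {f : R -> S} {P : R -> Prop}
    {s : seq (R * R)} :
  f 0 = 0 -> {morph f : x y / x + y} -> {morph f : x y / x * y} ->
  (forall r, P r -> f r = 0) -> (forall ar, ar \in s -> P ar.2) ->
  f (\sum_(ar <- s) ar.1 * ar.2) = 0.
Proof.
move=> f0 fD fM fP sP; rewrite big_seq.
apply: (big_ind (fun x => f x = 0)) => [//|x y fx fy|ar /sP /fP fr].
  by rewrite fD fx fy addr0.
by rewrite fM fr mulr0.
Qed.

Section Evaluation.

Context {g : nat} (q : H1 g -> 'F_2).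

Definition gen_value (y : H1 g) (i : 'I_#|{: H1 g}|) : 'Z_8 :=
  sgn8 (q (enum_val i)) * indicator (ipair (enum_val i) y).

Definition Phi (p : FreeW g) : {ffun H1 g -> 'Z_8} := [ffun y => p.@[gen_value y]].

Lemma Phi1 : Phi 1 = 1.
Proof. by apply/ffunP => y; rewrite !ffunE meval1. Qed.

Lemma Phi0 : Phi 0 = 0.
Proof. by apply/ffunP => y; rewrite !ffunE meval0. Qed.

Lemma PhiD : {morph Phi : p p' / p + p'}.
Proof. by move=> p p'; apply/ffunP => y; rewrite !ffunE mevalD. Qed.

Lemma PhiM : {morph Phi : p p' / p * p'}.
Proof. by move=> p p'; apply/ffunP => y; rewrite !ffunE mevalM. Qed.

Lemma PhiZ (c : 'Z_8) (p : FreeW g) (y : H1 g) : Phi (c *: p) y = c * Phi p y.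
Proof. by rewrite !ffunE mevalZ. Qed.

Lemma Phi_gen (C y : H1 g) :
  (gen C).@[gen_value y] = sgn8 (q C) * indicator (ipair C y).
Proof. by rewrite /gen mevalXU /gen_value enum_rankK. Qed.

Lemma Phi_relator (r : FreeW g) :
  is_quadratic_refinement q -> is_relator q r -> Phi r = 0.
Proof.
move=> hq [[C1 [C2 [_ ->]]]|[C ->]]; apply/ffunP => y;
  rewrite /relator1 /relator2 !ffunE.
  rewrite mevalB mevalZ mevalB mevalD !mevalZ mevalM !Phi_gen.
  by rewrite hq ipairDl sgn8_indicator_sum subrr.
by rewrite mevalB mevalZ !expr2 mevalM Phi_gen -expr2 sgn8_indicator_sqr subrr.
Qed.

End Evaluation.

Theorem proposition6p2 (g : nat) (q : H1 g -> 'F_2) :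
  is_quadratic_refinement q ->
  exists Phi : FreeW g -> {ffun H1 g -> 'Z_8},
    [/\ Phi 1 = 1 /\
        (forall p p' : FreeW g, Phi (p + p') = Phi p + Phi p'),
        (forall p p' : FreeW g, Phi (p * p') = Phi p * Phi p'),
        (forall (c : 'Z_8) (p : FreeW g) (y : H1 g), Phi (c *: p) y = c * Phi p y),
        (forall C : H1 g, Phi (gen C) = [ffun y => sgn8 (q C) * ind C y])
      & (forall p : FreeW g, in_relIdeal q p -> Phi p = 0)].
Proof.
move=> hq; exists (Phi q); split.
- by split; [exact: Phi1 | exact: PhiD].
- exact: PhiM.
- exact: PhiZ.
- by move=> C; apply/ffunP => y; rewrite [LHS]ffunE Phi_gen ffunE indE.
move=> _ [s [sP ->]].
apply: (vanish_on_ideal (Phi0 q) (PhiD q) (PhiM q) _ sP) => r.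
exact: Phi_relator hq.
Qed.
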